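(* Assume $L$ is irreducible and $p\gg0$. Let $\theta\gg0$ with $L\theta=0$ and $\sum_i\theta_i=1$. Then there exist constants $0<m\le M$ such that $m\theta\le w^*(\mu,p)\le M\theta$ for all $\mu>0$; moreover $$\lim_{\mu\to0^+}w^*(\mu,p)=p\qquad\text{and}\qquad\lim_{\mu\to\infty}w^*(\mu,p)=\frac{\sum_{i=1}^n\theta_ip_i}{\sum_{i=1}^n\theta_i^2}\,\theta .$$
   Context: Let $n\ge2$ and $A=(a_{ij})_{n\times n}$ with $a_{ij}\ge0$ for $i\ne j$. The connection matrix $L$ has $L_{ij}=a_{ij}$ for $i\ne j$, $L_{ii}=-\sum_{k\ne i}a_{ki}$. For $\mu>0$ and $r\gg0$, $w^*(\mu,r)\gg0$ denotes the unique positive equilibrium of the single-species patch model $w_i'=\mu\sum_{j=1}^nL_{ij}w_j+w_i(r_i-w_i)$, $i=1,\dots,n$ (it exists and is globally asymptotically stable in $\mathbb R^n_+\setminus\{0\}$ when $L$ is irreducible). Inequalities between vectors are componentwise. *)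

From HB Require Import structures.
From mathcomp Require Import all_boot all_order all_algebra.
From mathcomp Require Import all_classical all_reals all_analysis.
Set Implicit Arguments. Unset Strict Implicit. Unset Printing Implicit Defensive.
Import Order.TTheory GRing.Theory Num.Theory.
Local Open Scope ring_scope.

Definition connection_matrix (R : realType) (n : nat) (A : 'M[R]_n) : 'M[R]_n :=
  \matrix_(i, j) (if i == j then - \sum_(k < n | k != i) A k i else A i j).

Definition irreducible_mx (R : realType) (n : nat) (L : 'M[R]_n) : Prop :=
  forall i j : 'I_n, connect [rel k l | (k != l) && (L k l != 0)] i j.

(* w is a positive equilibrium of w_i' = mu sum_j L_ij w_j + w_i (r_i - w_i). *)
Definition is_pos_equilibrium (R : realType) (n : nat) (L : 'M[R]_n)
    (mu : R) (r w : 'I_n -> R) : Prop :=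
  (forall i, 0 < w i) /\
  (forall i, mu * (\sum_j L i j * w j) + w i * (r i - w i) = 0).

From HB Require Import structures.
From mathcomp Require Import all_boot all_order all_algebra.
From mathcomp Require Import all_classical all_reals all_analysis.
From mathcomp Require Import ring lra.
Import Order.TTheory GRing.Theory Num.Theory.
Import numFieldNormedType.Exports.
Local Open Scope classical_set_scope.
Local Open Scope ring_scope.
Set Implicit Arguments. Unset Strict Implicit.

(* Let L be the connection matrix of A and w = w*(mu, p).  Every column of L
   sums to zero, so the total flux sum_i (L w)_i vanishes; and when L theta = 0
   the quantity -2 sum_i u_i (L (theta u))_i equals the Dirichlet sum
   sum_ij L_ij theta_j (u_i - u_j)^2, whose terms are nonnegative.
   1. Comparison.  At an index maximising (minimising) w_k / theta_k the flux
      (L w)_i is nonpositive (nonnegative), so the equilibrium equation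
      w_i (p_i - w_i) = - mu (L w)_i gives w_i <= p_i (w_i >= p_i).  This yields
      m theta <= w <= M theta with m = (sum_j theta_j/p_j)^-1, M = sum_j p_j/theta_j.
   2. mu -> 0.  The same equation and these bounds give |p_i - w_i| = O(mu).
   3. mu -> +oo.  For u = w / theta the Dirichlet sum is O(1/mu), so u_k - u_l
      tends to 0 along every edge of the graph of L, hence for all k, l by
      irreducibility.  Finally the vanishing total flux sum_j w_j (p_j - w_j) = 0
      controls the distance from u_i to (sum theta p)/(sum theta^2) by the
      differences u_j - u_i. *)

Lemma sum_ge_term (R : numDomainType) (I : finType) (F : I -> R) (k : I) :
  (forall j, 0 <= F j) -> F k <= \sum_j F j.
Proof. by move=> F_ge0; rewrite (bigD1 k) //= lerDl sumr_ge0. Qed.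

Section ConnectionMatrix.
Variables (R : realType) (n : nat) (A : 'M[R]_n).
Local Notation L := (connection_matrix A).

Lemma connection_offdiag i j : i != j -> L i j = A i j.
Proof. by move=> ij; rewrite mxE (negbTE ij). Qed.

(* Each column of L sums to zero: dispersal conserves the total population. *)
Lemma connection_colsum0 j : \sum_i L i j = 0.
Proof.
rewrite (bigD1 j) //= mxE eqxx.
rewrite (eq_bigr (fun i => A i j)); last by move=> i ij; rewrite connection_offdiag.
by rewrite addNr.
Qed.

Lemma total_flux0 (w : 'I_n -> R) : \sum_i \sum_j L i j * w j = 0.
Proof.
rewrite exchange_big big1 //= => j _.
by rewrite -mulr_suml connection_colsum0 mul0r.
Qed.

Lemma equilibrium_balance mu (r w : 'I_n -> R) :
  is_pos_equilibrium L mu r w ->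
  forall i, w i * (r i - w i) = - (mu * \sum_j L i j * w j).
Proof. by move=> [_ eq_w] i; apply/eqP; rewrite -subr_eq0 opprK addrC eq_w. Qed.

Lemma equilibrium_net_growth0 mu (r w : 'I_n -> R) :
  is_pos_equilibrium L mu r w -> \sum_i w i * (r i - w i) = 0.
Proof.
move=> w_eq; under eq_bigr do rewrite (equilibrium_balance w_eq).
by rewrite sumrN -mulr_sumr total_flux0 mulr0 oppr0.
Qed.

Lemma dirichlet_identity (theta u : 'I_n -> R) :
  (forall i, \sum_j L i j * theta j = 0) ->
  \sum_i \sum_j L i j * theta j * (u i - u j) ^+ 2 =
  - 2 * \sum_i u i * (\sum_j L i j * (theta j * u j)).
Proof.
move=> L_theta.
have expand i j : L i j * theta j * (u i - u j) ^+ 2 =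
    L i j * theta j * u i ^+ 2 + L i j * (theta j * u j ^+ 2)
    - 2 * (u i * (L i j * (theta j * u j))).
  by ring.
under eq_bigr do under eq_bigr do rewrite expand.
under eq_bigr do rewrite big_split /= big_split /= sumrN.
rewrite big_split /= big_split /= sumrN total_flux0 addr0.
rewrite big1 => [|i _]; last by rewrite -mulr_suml L_theta mul0r.
rewrite add0r mulNr mulr_sumr; congr (- _); apply: eq_bigr => i _.
by rewrite -!mulr_sumr.
Qed.
End ConnectionMatrix.

Definition ratio_upper (R : realType) (n : nat) (theta p : 'I_n -> R) : R :=
  \sum_j p j / theta j.
Definition ratio_lower (R : realType) (n : nat) (theta p : 'I_n -> R) : R :=
  (\sum_j theta j / p j)^-1.

Section Comparison.
Variables (R : realType) (n : nat) (A : 'M[R]_n) (theta p : 'I_n -> R).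
Hypothesis A_ge0 : forall i j, i != j -> 0 <= A i j.
Hypothesis theta_gt0 : forall i, 0 < theta i.
Hypothesis p_gt0 : forall i, 0 < p i.
Hypothesis L_theta : forall i, \sum_j connection_matrix A i j * theta j = 0.
Local Notation L := (connection_matrix A).
Local Notation M := (ratio_upper theta p).
Local Notation m := (ratio_lower theta p).
Local Notation ratio w j := (w j / theta j).

Lemma dirichlet_term_ge0 (u : 'I_n -> R) i j :
  0 <= L i j * theta j * (u i - u j) ^+ 2.
Proof.
case: (eqVneq i j) => [->|ij]; first by rewrite subrr expr0n /= mulr0.
by rewrite mulr_ge0 ?sqr_ge0 // mulr_ge0 ?connection_offdiag ?A_ge0 ?ltW.
Qed.

Lemma dirichlet_sum_ge_edge (u : 'I_n -> R) a b :
  L a b * theta b * (u a - u b) ^+ 2 <=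
  \sum_i \sum_j L i j * theta j * (u i - u j) ^+ 2.
Proof.
apply: le_trans (@sum_ge_term _ _ (fun i => \sum_j _) a _); last first.
  by move=> i; apply: sumr_ge0 => j _; exact: dirichlet_term_ge0.
by apply: (@sum_ge_term _ _ (fun j => L a j * theta j * _)) => j; exact: dirichlet_term_ge0.
Qed.

(* Maximum principle: where w_k / theta_k is maximal, L w <= (w/theta) L theta = 0. *)
Lemma flux_at_max_ratio (w : 'I_n -> R) i0 :
  (forall k, ratio w k <= ratio w i0) -> \sum_j L i0 j * w j <= 0.
Proof.
move=> w_max; set U := ratio w i0.
apply: (@le_trans _ _ (\sum_j L i0 j * theta j * U)); last first.
  by rewrite -mulr_suml L_theta mul0r.
apply: ler_sum => j _; case: (eqVneq j i0) => [->|ji].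
  by rewrite /U -mulrA [theta i0 * _]mulrC mulfVK // gt_eqF.
rewrite -mulrA; apply: ler_wpM2l.
  by rewrite connection_offdiag 1?eq_sym // A_ge0 // eq_sym.
by rewrite -ler_pdivrMl // mulrC w_max.
Qed.

(* Minimum principle, by applying the maximum principle to - w. *)
Lemma flux_at_min_ratio (w : 'I_n -> R) i0 :
  (forall k, ratio w i0 <= ratio w k) -> 0 <= \sum_j L i0 j * w j.
Proof.
move=> w_min; rewrite -oppr_le0 -sumrN.
under eq_bigr do rewrite -mulrN.
by apply: (@flux_at_max_ratio (fun k => - w k)) => k; rewrite !mulNr lerN2.
Qed.

Lemma ratio_lower_gt0 (k : 'I_n) : 0 < m.
Proof.
rewrite invr_gt0; apply: lt_le_trans (sum_ge_term k _); first by rewrite divr_gt0.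
by move=> j; rewrite ltW // divr_gt0.
Qed.

Lemma equilibrium_upper mu w : 0 < mu -> is_pos_equilibrium L mu p w ->
  forall i, w i <= M * theta i.
Proof.
move=> mu_gt0 w_eq i.
case: (@arg_maxP _ _ _ i predT (fun k => ratio w k)) => // i0 _ w_max.
have w_le_p : w i0 <= p i0.
  have flux_le0 := flux_at_max_ratio (fun k => w_max k isT).
  have : 0 <= w i0 * (p i0 - w i0).
    by rewrite (equilibrium_balance w_eq) oppr_ge0 pmulr_rle0.
  by rewrite pmulr_rge0 ?subr_ge0 //; case: w_eq.
rewrite -ler_pdivrMr //; apply: le_trans (w_max i _) _ => //.
apply: (@le_trans _ _ (p i0 / theta i0)); first by rewrite ler_pM2r ?invr_gt0.
by apply: sum_ge_term => j; rewrite divr_ge0 ?ltW.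
Qed.

Lemma equilibrium_lower mu w : 0 < mu -> is_pos_equilibrium L mu p w ->
  forall i, m * theta i <= w i.
Proof.
move=> mu_gt0 w_eq i.
case: (@arg_minP _ _ _ i predT (fun k => ratio w k)) => // i0 _ w_min.
have p_le_w : p i0 <= w i0.
  have flux_ge0 := flux_at_min_ratio (fun k => w_min k isT).
  have : w i0 * (p i0 - w i0) <= 0.
    by rewrite (equilibrium_balance w_eq) oppr_le0 pmulr_rge0.
  by rewrite pmulr_rle0 ?subr_le0 //; case: w_eq.
rewrite -ler_pdivlMr //; apply: le_trans (w_min i _) => //.
apply: (@le_trans _ _ (p i0 / theta i0)); last by rewrite ler_pM2r ?invr_gt0.
rewrite -invf_div lef_pV2 ?posrE ?divr_gt0 ?(ratio_lower_gt0 i0) //.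
  by apply: sum_ge_term => j; rewrite divr_ge0 ?ltW.
by rewrite -invr_gt0 (ratio_lower_gt0 i0).
Qed.

Lemma equilibrium_near_growth mu w i : 0 < mu -> is_pos_equilibrium L mu p w ->
  `|p i - w i| <= mu * ((\sum_j `|L i j| * (M * theta j)) / (m * theta i)).
Proof.
move=> mu_gt0 w_eq; have w_gt0 : 0 < w i by case: w_eq.
have m_gt0 : 0 < m := ratio_lower_gt0 i.
have flux_bound : `|\sum_j L i j * w j| <= \sum_j `|L i j| * (M * theta j).
  apply: le_trans (ler_norm_sum _ _ _) _; apply: ler_sum => j _.
  rewrite normrM ler_wpM2l // ger0_norm ?(equilibrium_upper mu_gt0 w_eq) //.
  by case: w_eq => /(_ j) /ltW.
have balance : `|p i - w i| * w i = mu * `|\sum_j L i j * w j|.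
  have : `|(p i - w i) * w i| = `|mu * \sum_j L i j * w j|.
    by rewrite mulrC (equilibrium_balance w_eq) normrN.
  by rewrite !normrM (gtr0_norm w_gt0) (gtr0_norm mu_gt0).
rewrite mulrA ler_pdivlMr ?mulr_gt0 //.
apply: (@le_trans _ _ (`|p i - w i| * w i)).
  by rewrite ler_wpM2l ?(equilibrium_lower mu_gt0 w_eq).
by rewrite balance ler_pM2l.
Qed.

Lemma dirichlet_energy_bound mu w : 0 < mu -> is_pos_equilibrium L mu p w ->
  mu * (\sum_i \sum_j L i j * theta j * (ratio w i - ratio w j) ^+ 2) <=
  2 * \sum_i M * (M * theta i) * p i.
Proof.
move=> mu_gt0 w_eq.
have theta_u j : theta j * ratio w j = w j by rewrite mulrC mulfVK ?gt_eqF.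
have w_gt0 j : 0 < w j by case: w_eq.
have u_ge0 j : 0 <= ratio w j by rewrite divr_ge0 ?ltW.
have u_le j : ratio w j <= M by rewrite ler_pdivrMr ?(equilibrium_upper mu_gt0 w_eq).
rewrite dirichlet_identity //.
under eq_bigr do under eq_bigr do rewrite theta_u.
rewrite mulrCA mulNr -mulrN ler_pM2l // mulr_sumr -sumrN; apply: ler_sum => i _.
rewrite mulrCA -mulrN -(equilibrium_balance w_eq).
apply: (@le_trans _ _ (ratio w i * (w i * p i))).
  apply: ler_wpM2l => //; apply: ler_wpM2l; [exact: ltW | by rewrite gerBl ltW].
rewrite -[X in _ <= X]mulrA; apply: ler_pM => //.
  by rewrite mulr_ge0 ?ltW.
by rewrite ler_pM2r ?(equilibrium_upper mu_gt0 w_eq).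
Qed.
End Comparison.

Lemma balance_deviation (R : comNzRingType) (n : nat) (theta p u : 'I_n -> R) i :
  \sum_j theta j * u j * (p j - theta j * u j) = 0 ->
  u i * (\sum_j theta j * p j - u i * \sum_j theta j ^+ 2) =
  - \sum_j (u j - u i) * (theta j * p j - theta j ^+ 2 * (u j + u i)).
Proof.
move=> balanced; apply/eqP; rewrite -addr_eq0; apply/eqP; rewrite -[RHS]balanced.
rewrite mulrBr !mulr_sumr -sumrB -big_split /=.
by apply: eq_bigr => j _; ring.
Qed.

Lemma deviation_bound (R : realFieldType) (n : nat) (theta p u : 'I_n -> R) i m M :
  (forall j, 0 <= theta j * p j) -> (forall j, 0 <= u j <= M) ->
  0 < m -> m <= u i ->
  \sum_j theta j * u j * (p j - theta j * u j) = 0 ->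
  `|\sum_j theta j * p j - u i * \sum_j theta j ^+ 2| <=
  m^-1 * \sum_j (theta j * p j + 2 * M * theta j ^+ 2) * `|u j - u i|.
Proof.
move=> thp_ge0 u_bounds m_gt0 m_le balanced.
have ui_ge0 : 0 <= u i by case/andP: (u_bounds i).
rewrite ler_pdivlMl //; apply: (@le_trans _ _ (u i * `|\sum_j theta j * p j
    - u i * \sum_j theta j ^+ 2|)); first by rewrite ler_wpM2r.
rewrite -{1}(ger0_norm ui_ge0) -normrM balance_deviation // normrN.
apply: le_trans (ler_norm_sum _ _ _) _; apply: ler_sum => j _.
rewrite normrM mulrC ler_wpM2r //.
have /andP [uj_ge0 uj_le] := u_bounds j; have /andP [_ ui_le] := u_bounds i.
have := thp_ge0 j; have := sqr_ge0 (theta j) => sq_ge0 thpj_ge0.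
have upper : theta j ^+ 2 * (u j + u i) <= 2 * M * theta j ^+ 2 by nra.
have lower : 0 <= theta j ^+ 2 * (u j + u i) by nra.
rewrite ler_norml; apply/andP; split; lra.
Qed.

Section Convergence.
Variable R : realType.

Lemma cvg_dist_bound {T} {F : set_system T} {FF : Filter F} (f g : T -> R) (l : R) :
  g @ F --> 0 -> (\forall x \near F, `|l - f x| <= g x) -> f @ F --> l.
Proof.
move=> g0 f_near; apply/cvgrPdist_le => e e_gt0; near=> x.
apply: le_trans (_ : g x <= e); first by near: x.
apply: le_trans (ler_norm _) _; near: x; exact: cvgr0_norm_le.
Unshelve. all: by end_near. Qed.

Lemma cvg0_lincomb {T} {F : set_system T} {FF : Filter F} (I : finType)
    (c : I -> R) (f : I -> T -> R) :
  (forall i, f i @ F --> 0) -> (\sum_i c i * f i x) @[x --> F] --> 0.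
Proof.
move=> f0.
have term_cvg i : c i * f i x @[x --> F] --> 0.
  by rewrite -(mulr0 (c i)); apply: cvgMl_tmp.
have := @cvg_big R I +%R 0 predT add_continuous T F (index_enum I)
  (fun i x => c i * f i x) (fun=> 0) FF (fun i _ => term_cvg i).
by rewrite big1.
Qed.

Lemma cvg0_of_energy_bound (f : R -> R) (K : R) :
  (forall mu, 0 < mu -> mu * f mu ^+ 2 <= K) -> f x @[x --> +oo] --> 0.
Proof.
move=> f_bound; apply/cvgrPdist_le => e e_gt0; near=> mu.
have mu_gt0 : 0 < mu by near: mu; apply: nbhs_pinfty_gt; rewrite num_real.
have mu_big : `|K| / e ^+ 2 < mu by near: mu; apply: nbhs_pinfty_gt; rewrite num_real.
rewrite sub0r normrN leNgt; apply/negP => e_lt.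
have : mu * e ^+ 2 < mu * f mu ^+ 2.
  by rewrite ltr_pM2l // -[f mu ^+ 2]real_normK ?num_real // ltr_pXn2r ?nnegrE ?(ltW e_gt0).
rewrite ltr_pdivrMr ?exprn_gt0 // in mu_big.
have := f_bound mu mu_gt0; have := ler_norm K; lra.
Unshelve. all: by end_near. Qed.
End Convergence.

Section EquilibriumFamily.
Variables (R : realType) (n : nat) (A : 'M[R]_n) (theta p : 'I_n -> R).
Variable wstar : R -> 'I_n -> R.
Hypothesis A_ge0 : forall i j, i != j -> 0 <= A i j.
Hypothesis theta_gt0 : forall i, 0 < theta i.
Hypothesis p_gt0 : forall i, 0 < p i.
Hypothesis L_theta : forall i, \sum_j connection_matrix A i j * theta j = 0.
Hypothesis wstar_eq :
  forall mu, 0 < mu -> is_pos_equilibrium (connection_matrix A) mu p (wstar mu).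
Local Notation L := (connection_matrix A).
Local Notation M := (ratio_upper theta p).
Local Notation m := (ratio_lower theta p).
Local Notation u mu j := (wstar mu j / theta j).

Lemma wstar_cvg_small_dispersal i : wstar mu i @[mu --> 0^'+] --> p i.
Proof.
set C := (\sum_j `|L i j| * (M * theta j)) / (m * theta i).
apply: (@cvg_dist_bound _ _ _ _ _ (fun mu => mu * C)).
  have lim0 : (fun mu => mu * C) @ 0 --> 0 * C by apply: cvgMr_tmp; exact: cvg_id.
  by rewrite mul0r in lim0; exact: cvg_at_right_filter.
near=> mu; have mu_gt0 : 0 < mu by near: mu; exact: nbhs_right_gt.
exact: (equilibrium_near_growth A_ge0 theta_gt0 p_gt0 L_theta i mu_gt0 (wstar_eq mu_gt0)).
Unshelve. all: by end_near. Qed.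

Lemma ratio_edge_cvg a b : a != b -> L a b != 0 ->
  u mu a - u mu b @[mu --> +oo] --> 0.
Proof.
move=> ab Lab_neq0.
have Lab_gt0 : 0 < L a b by rewrite lt_neqAle eq_sym Lab_neq0 connection_offdiag ?A_ge0.
set K := 2 * \sum_i M * (M * theta i) * p i.
apply: (@cvg0_of_energy_bound _ _ (K / (L a b * theta b))) => mu mu_gt0.
rewrite ler_pdivlMr ?mulr_gt0 //.
apply: le_trans (dirichlet_energy_bound A_ge0 theta_gt0 p_gt0 L_theta mu_gt0 (wstar_eq mu_gt0)).
by rewrite -mulrA ler_pM2l // mulrC dirichlet_sum_ge_edge.
Qed.

Hypothesis L_irreducible : irreducible_mx L.

Lemma ratio_diff_cvg i j : u mu i - u mu j @[mu --> +oo] --> 0.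
Proof.
have /connectP [path edges ->] := L_irreducible i j.
elim: path i edges => [|k path IH] i /=.
  by move=> _; under eq_cvg do rewrite subrr; exact: cvg_cst.
move=> /andP [/andP [ik Lik] edges].
have telescope mu : u mu i - u mu (last k path) =
    (u mu i - u mu k) + (u mu k - u mu (last k path)) by rewrite addrA subrK.
under eq_cvg do rewrite telescope.
have lim := cvgD (ratio_edge_cvg ik Lik) (IH k edges).
by rewrite addr0 in lim; exact: lim.
Qed.

Lemma wstar_cvg_large_dispersal i : wstar mu i @[mu --> +oo] -->
  ((\sum_j theta j * p j) / (\sum_j theta j ^+ 2)) * theta i.
Proof.
set S1 := \sum_j theta j * p j; set S2 := \sum_j theta j ^+ 2.
have S2_gt0 : 0 < S2.
  by apply: lt_le_trans (sum_ge_term i _) => [|j]; rewrite ?exprn_gt0 ?sqr_ge0.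
have m_gt0 : 0 < m := ratio_lower_gt0 theta_gt0 p_gt0 i.
pose c j := theta i / S2 * m^-1 * (theta j * p j + 2 * M * theta j ^+ 2).
apply: (@cvg_dist_bound _ _ _ _ _ (fun mu => \sum_j c j * `|u mu j - u mu i|)).
  apply: cvg0_lincomb => j; have lim := cvg_norm (ratio_diff_cvg j i).
  by rewrite normr0 in lim; exact: lim.
near=> mu.
have mu_gt0 : 0 < mu by near: mu; apply: nbhs_pinfty_gt; rewrite num_real.
have w_eq := wstar_eq mu_gt0.
have theta_u j : theta j * u mu j = wstar mu j by rewrite mulrC mulfVK ?gt_eqF.
have balanced : \sum_j theta j * u mu j * (p j - theta j * u mu j) = 0.
  by under eq_bigr do rewrite !theta_u; exact: equilibrium_net_growth0 w_eq.
have distance : S1 / S2 * theta i - wstar mu i =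
    theta i / S2 * (S1 - u mu i * S2).
  by rewrite -(theta_u i); field; rewrite !gt_eqF.
have -> : \sum_j c j * `|u mu j - u mu i| = theta i / S2 *
    (m^-1 * \sum_j (theta j * p j + 2 * M * theta j ^+ 2) * `|u mu j - u mu i|).
  by rewrite [RHS]mulrA [RHS]mulr_sumr; apply: eq_bigr => j _; rewrite /c -!mulrA.
rewrite distance normrM (ger0_norm (divr_ge0 (ltW (theta_gt0 i)) (ltW S2_gt0))).
rewrite ler_pM2l ?divr_gt0 //.
apply: deviation_bound => //.
- by move=> j; rewrite mulr_ge0 ?ltW.
- move=> j; have w_gt0 : 0 < wstar mu j by case: w_eq.
  rewrite divr_ge0 ?(ltW w_gt0) ?(ltW (theta_gt0 j)) //= ler_pdivrMr //.
  exact: (equilibrium_upper A_ge0 theta_gt0 p_gt0 L_theta mu_gt0 w_eq).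
- rewrite ler_pdivlMr //.
  exact: (equilibrium_lower A_ge0 theta_gt0 p_gt0 L_theta mu_gt0 w_eq).
Unshelve. all: by end_near. Qed.
End EquilibriumFamily.

Theorem mainTheorem10 (R : realType) (n : nat) (A : 'M[R]_n)
    (p theta : 'I_n -> R) (wstar : R -> 'I_n -> R) :
  (2 <= n)%N ->
  (forall i j, i != j -> 0 <= A i j) ->
  irreducible_mx (connection_matrix A) ->
  (forall i, 0 < p i) ->
  (forall i, 0 < theta i) ->
  (forall i, \sum_j connection_matrix A i j * theta j = 0) ->
  \sum_i theta i = 1 ->
  (forall mu, 0 < mu -> is_pos_equilibrium (connection_matrix A) mu p (wstar mu)) ->
  (exists m M : R, 0 < m /\ m <= M /\
     forall mu, 0 < mu -> forall i, m * theta i <= wstar mu i <= M * theta i) /\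
  (forall i, wstar mu i @[mu --> 0^'+] --> p i) /\
  (forall i, wstar mu i @[mu --> +oo] -->
      ((\sum_j theta j * p j) / (\sum_j theta j ^+ 2)) * theta i).
Proof.
move=> n_ge2 A_ge0 L_irr p_gt0 theta_gt0 L_theta _ wstar_eq.
have lower mu (mu_gt0 : 0 < mu) := equilibrium_lower A_ge0 theta_gt0 p_gt0 L_theta
  mu_gt0 (wstar_eq mu mu_gt0).
have upper mu (mu_gt0 : 0 < mu) := equilibrium_upper A_ge0 theta_gt0 p_gt0 L_theta
  mu_gt0 (wstar_eq mu mu_gt0).
have k : 'I_n by exists 0%N; exact: leq_trans n_ge2.
split; last split.
- exists (ratio_lower theta p), (ratio_upper theta p); split; last split.
  + exact: ratio_lower_gt0 theta_gt0 p_gt0 k.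
  + by rewrite -(ler_pM2r (theta_gt0 k)) (le_trans (lower 1 ltr01 k) (upper 1 ltr01 k)).
  + by move=> mu mu_gt0 i; rewrite lower ?upper.
- exact: (wstar_cvg_small_dispersal A_ge0 theta_gt0 p_gt0 L_theta wstar_eq).
- exact: (wstar_cvg_large_dispersal A_ge0 theta_gt0 p_gt0 L_theta wstar_eq L_irr).
Qed.
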